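(* Let $\Sigma$ be a finite nonempty set and let $\{(A_i,B_i)\in\mathbb{R}^{n\times n}\times\mathbb{R}^{n\times m} : i\in\Sigma\}$ be given. The switched control system $x(k+1)=A_{\sigma(k)}x(k)+B_{\sigma(k)}u(k)$ is mode-dependent feedback stabilizable (DFS) if and only if it is current-mode-dependent memory-feedback stabilizable (DFS$_m$).
   Context: Let $\Sigma$ be a finite nonempty set (alphabet) and $\{(A_i,B_i)\in\mathbb{R}^{n\times n}\times\mathbb{R}^{n\times m} : i\in\Sigma\}$. Consider the discrete-time switched control system $x(k+1)=A_{\sigma(k)}x(k)+B_{\sigma(k)}u(k)$, $k\in\mathbb{N}=\{0,1,2,\dots\}$, where the switching signal $\sigma:\mathbb{N}\to\Sigma$ is arbitrary (the set of all such signals is denoted $\Sigma^\omega$) and $u(k)\in\mathbb{R}^m$ is the control. $\|\cdot\|$ is the Euclidean norm. Let $\mathcal{H}$ be the set of all tuples $(x_k,\dots,x_0;\,i_k,\dots,i_0)$ with $k\in\mathbb{N}$, $x_j\in\mathbb{R}^n$, $i_j\in\Sigma$ (state string and mode string of equal length $k+1$), and let $\mathcal{H}_-$ be the set of all tuples $(x_k,\dots,x_0;\,i_{k-1},\dots,i_0)$ with $k\in\mathbb{N}$ (mode string one shorter than the state string; empty when $k=0$). Controllers are arbitrary functions (no regularity assumed) of the following kinds, each determining, for every $x_0\in\mathbb{R}^n$ and $\sigma\in\Sigma^\omega$, a unique closed-loop trajectory with $x(0)=x_0$: (1) static mode-independent $\Phi:\mathbb{R}^n\to\mathbb{R}^m$,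 with $u(k)=\Phi(x(k))$; (1)$^d$ static mode-dependent $\Phi_d:\Sigma\times\mathbb{R}^n\to\mathbb{R}^m$, with $u(k)=\Phi_d(\sigma(k),x(k))$; (2) current-mode-independent with memory $\Psi:\mathcal{H}_-\to\mathbb{R}^m$, with $u(k)=\Psi(x(k),\dots,x(0);\,\sigma(k-1),\dots,\sigma(0))$; (2)$^d$ current-mode-dependent with memory $\Psi_d:\mathcal{H}\to\mathbb{R}^m$, with $u(k)=\Psi_d(x(k),\dots,x(0);\,\sigma(k),\dots,\sigma(0))$. The closed loop is uniformly exponentially stable (UES) if there exist $M>0$ and $\gamma\in[0,1)$ such that $\|x(k)\|\le M\gamma^k\|x_0\|$ for all $x_0\in\mathbb{R}^n$, all $\sigma\in\Sigma^\omega$ and all $k\in\mathbb{N}$. The system is called IFS, DFS, IFS$_m$, DFS$_m$ if there exists a controller of kind (1), (1)$^d$, (2), (2)$^d$ respectively such that the closed loop is UES. *)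

From mathcomp Require Import all_boot all_order all_algebra.
From mathcomp Require Import reals.
Set Implicit Arguments. Unset Strict Implicit. Unset Printing Implicit Defensive.
Import Order.TTheory GRing.Theory Num.Theory.
Local Open Scope ring_scope.

Section Switched.
Variables (R : realType) (Sigma : finType) (n m : nat).
Variables (A : Sigma -> 'M[R]_n) (B : Sigma -> 'M[R]_(n, m)).

Definition enorm (v : 'cV[R]_n) : R := Num.sqrt (\sum_(i < n) v i 0 ^+ 2).

(* Generic closed loop: given switching signal sigma and a control law
   u k h (where h = [:: x(k); ...; x(0)] is the state history at step k),
   closed_hist k = [:: x(k); x(k-1); ...; x(0)]. *)
Fixpoint closed_hist (sigma : nat -> Sigma)
    (u : nat -> seq 'cV[R]_n -> 'cV[R]_m) (x0 : 'cV[R]_n) (k : nat)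
    : seq 'cV[R]_n :=
  match k with
  | 0 => [:: x0]
  | k'.+1 => let h := closed_hist sigma u x0 k' in
             (A (sigma k') *m head 0 h + B (sigma k') *m u k' h) :: h
  end.

Definition closed_traj sigma u x0 (k : nat) : 'cV[R]_n :=
  head 0 (closed_hist sigma u x0 k).

(* mode string (sigma(j-1), ..., sigma(0)) of length j *)
Definition modes (sigma : nat -> Sigma) (j : nat) : seq Sigma :=
  [seq sigma i | i <- rev (iota 0 j)].

Definition UES (law : (nat -> Sigma) -> nat -> seq 'cV[R]_n -> 'cV[R]_m) : Prop :=
  exists (M gamma : R), 0 < M /\ 0 <= gamma < 1 /\
    forall (x0 : 'cV[R]_n) (sigma : nat -> Sigma) (k : nat),
      enorm (closed_traj sigma (law sigma) x0 k) <= M * gamma ^+ k * enorm x0.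

Definition DFS : Prop :=
  exists Phid : Sigma -> 'cV[R]_n -> 'cV[R]_m,
    UES (fun sigma k h => Phid (sigma k) (head 0 h)).

(* Psi_d is a function on pairs (state string, mode string); only its values
   on pairs of equal length k+1 (the set H) are ever used. *)
Definition DFSm : Prop :=
  exists Psid : seq 'cV[R]_n -> seq Sigma -> 'cV[R]_m,
    UES (fun sigma k h => Psid h (modes sigma k.+1)).

Definition IFS : Prop :=
  exists Phi : 'cV[R]_n -> 'cV[R]_m, UES (fun sigma k h => Phi (head 0 h)).
Definition IFSm : Prop :=
  exists Psi : seq 'cV[R]_n -> seq Sigma -> 'cV[R]_m,
    UES (fun sigma k h => Psi h (modes sigma k)).

End Switched.

From mathcomp Require Import all_boot all_order all_algebra.
From mathcomp Require Import reals.
From mathcomp Require Import boolp classical_sets.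
From mathcomp Require Import ring lra.
Set Implicit Arguments. Unset Strict Implicit. Unset Printing Implicit Defensive.
Import Order.TTheory GRing.Theory Num.Theory.
Local Open Scope ring_scope.
Local Open Scope classical_set_scope.

(* A static mode-dependent law is a memory law reading only the newest state
   and mode, so DFS implies DFS_m.  Conversely, fix a memory law with UES
   constants M, gamma and some lam in (gamma, 1), and let V x be the infimum
   of the c for which some memory law started at x satisfies
   |x(k)| <= c lam^k against every switching signal.  Then |x| <= V x <= M |x|.  Given x and a mode i,
   run a near-optimal memory law from x for one step under mode i: what
   remains is a memory law from the successor state with constant c lam.
   Hence for every mu in (lam, 1) some input u gives
   V (A_i x + B_i u) <= mu V x, and choosing such a u for every pair (i, x)
   is a static law along which V, hence |x(k)|, decays like mu^k. *)

Section Switched.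
Variables (R : realType) (Sigma : finType) (n m : nat).
Variables (A : Sigma -> 'M[R]_n) (B : Sigma -> 'M[R]_(n, m)).

Local Notation hist := (closed_hist A B).
Local Notation traj := (closed_traj A B).

Lemma enorm_ge0 (v : 'cV[R]_n) : 0 <= enorm v.
Proof. exact: sqrtr_ge0. Qed.

Lemma eq_closed_hist sigma u1 u2 x0 : (forall k h, u1 k h = u2 k h) ->
  forall k, hist sigma u1 x0 k = hist sigma u2 x0 k.
Proof. by move=> e; elim=> //= k ->; rewrite e. Qed.

Lemma closed_histS sigma u x0 k : hist sigma u x0 k.+1 =
  (A (sigma k) *m head 0 (hist sigma u x0 k) + B (sigma k) *m u k (hist sigma u x0 k))
  :: hist sigma u x0 k.
Proof. by []. Qed.

Lemma closed_hist_cons sigma u x0 k : exists y h, hist sigma u x0 k = y :: h.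
Proof. by case: k => [|k] /=; eauto. Qed.

Lemma head_modes (sigma : nat -> Sigma) k d : head d (modes sigma k.+1) = sigma k.
Proof. by rewrite /modes -addn1 iotaD rev_cat /= add0n. Qed.

Definition cons_signal (i : Sigma) (sigma : nat -> Sigma) : nat -> Sigma :=
  fun j => if j is j'.+1 then sigma j' else i.

Lemma modes_cons_signal i sigma j :
  modes (cons_signal i sigma) j.+1 = modes sigma j ++ [:: i].
Proof.
rewrite /modes /= rev_cons -cats1 map_cat /=; congr (_ ++ _).
rewrite -[1%N]/(1 + 0)%N iotaDl !map_rev -map_comp.
by congr rev; apply: eq_map => t /=; rewrite add1n.
Qed.

Definition memory_law (Psi : seq 'cV[R]_n -> seq Sigma -> 'cV[R]_m)
  (sigma : nat -> Sigma) (k : nat) (h : seq 'cV[R]_n) := Psi h (modes sigma k.+1).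

(* The law seen from time 1 on: it is fed the full history, including x(0)
   and sigma(0), which the truncated history lacks. *)
Definition tail_law Psi x (i : Sigma) : seq 'cV[R]_n -> seq Sigma -> 'cV[R]_m :=
  fun h s => Psi (h ++ [:: x]) (s ++ [:: i]).

Lemma closed_hist_cons_signal Psi x i sigma k :
  hist (cons_signal i sigma) (memory_law Psi (cons_signal i sigma)) x k.+1 =
  hist sigma (memory_law (tail_law Psi x i) sigma)
       (A i *m x + B i *m Psi [:: x] [:: i]) k ++ [:: x].
Proof.
elim: k => [//|k IH]; rewrite closed_histS IH.
have [y [h E]] := closed_hist_cons sigma
  (memory_law (tail_law Psi x i) sigma) (A i *m x + B i *m Psi [:: x] [:: i]) k.
by rewrite [in RHS]closed_histS E /= /memory_law modes_cons_signal.
Qed.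

Lemma DFS_DFSm (i0 : Sigma) : DFS A B -> DFSm A B.
Proof.
case=> Phid [M [g [M0 [g01 HU]]]].
exists (fun h s => Phid (head i0 s) (head 0 h)), M, g; split=> //; split=> //.
move=> x0 sigma k; rewrite /closed_traj (@eq_closed_hist _ _
  (fun j h => Phid (sigma j) (head 0 h))) => [|j h]; first exact: HU.
by rewrite head_modes.
Qed.

Section ValueFunction.
Variable lam : R.

Definition memory_bound x c := exists Psi, forall sigma k,
  enorm (traj sigma (memory_law Psi sigma) x k) <= c * lam ^+ k.

Lemma memory_bound_step x c i : memory_bound x c ->
  exists u, memory_bound (A i *m x + B i *m u) (c * lam).
Proof.
case=> Psi HPsi; exists (Psi [:: x] [:: i]), (tail_law Psi x i) => sigma k.
have := HPsi (cons_signal i sigma) k.+1.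
rewrite /closed_traj closed_hist_cons_signal.
have [y [h ->]] := closed_hist_cons sigma (memory_law (tail_law Psi x i) sigma)
  (A i *m x + B i *m Psi [:: x] [:: i]) k.
by rewrite /= exprS mulrA.
Qed.

Variables (i0 : Sigma) (M : R).
Hypothesis memory_bound_M : forall x, memory_bound x (M * enorm x).

Definition value x := inf (memory_bound x).

Lemma memory_bound_ge_enorm x c : memory_bound x c -> enorm x <= c.
Proof. by case=> Psi /(_ (fun=> i0) 0%N); rewrite expr0 mulr1. Qed.

Lemma has_inf_memory_bound x : has_inf (memory_bound x).
Proof.
split; first by exists (M * enorm x).
by exists (enorm x) => c; apply: memory_bound_ge_enorm.
Qed.

Lemma value_ge_enorm x : enorm x <= value x.
Proof.
apply: lb_le_inf; first exact: (has_inf_memory_bound x).1.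
by move=> c; apply: memory_bound_ge_enorm.
Qed.

Lemma value_le x c : memory_bound x c -> value x <= c.
Proof. exact: (ge_inf (has_inf_memory_bound x).2). Qed.

Lemma near_optimal_memory_bound mu x : 0 < lam < mu ->
  exists2 c, memory_bound x c & c * lam <= mu * value x.
Proof.
case/andP=> lam0 lammu; have V0 := le_trans (enorm_ge0 x) (value_ge_enorm x).
have [V_le0|V_gt0] := leP (value x) 0.
  have x0 : enorm x = 0.
    by apply/eqP; rewrite eq_le enorm_ge0 andbT (le_trans (value_ge_enorm x)).
  exists (M * enorm x); rewrite // x0 mulr0 mul0r.
  by rewrite mulr_ge0 // (ltW (lt_trans _ lammu)).
have eps0 : 0 < (mu / lam - 1) * value x.
  by rewrite mulr_gt0 // subr_gt0 ltr_pdivlMr // mul1r.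
have [c Bc c_lt] := inf_adherent eps0 (has_inf_memory_bound x).
have V_eps : value x + (mu / lam - 1) * value x = mu * value x / lam.
  by field; rewrite gt_eqF.
by exists c => //; rewrite -ler_pdivlMr // ltW // -V_eps.
Qed.

Lemma value_contraction mu i x : 0 < lam < mu ->
  exists u, value (A i *m x + B i *m u) <= mu * value x.
Proof.
move=> lam_mu; have [c Bc cle] := near_optimal_memory_bound x lam_mu.
have [u Bu] := memory_bound_step i Bc.
by exists u; apply: le_trans (value_le Bu) cle.
Qed.

End ValueFunction.

Lemma DFSm_DFS (i0 : Sigma) : DFSm A B -> DFS A B.
Proof.
case=> Psi0 [M [g [M0 [/andP[g0 g1] HU]]]].
pose lam := (1 + g) / 2; pose mu := (3 + g) / 4.
have lam_mu : 0 < lam < mu by apply/andP; split; rewrite /lam /mu; lra.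
have [mu0 mu1] : 0 <= mu /\ mu < 1 by split; rewrite /mu; lra.
have boundM x : memory_bound lam x (M * enorm x).
  exists Psi0 => sigma k; apply: le_trans (HU x sigma k) _.
  rewrite mulrAC; apply: ler_wpM2l; first by rewrite mulr_ge0 ?enorm_ge0 ?ltW.
  by rewrite lerXn2r ?nnegrE //; rewrite /lam; lra.
pose V := value lam.
have [Phi HPhi] := choice (fun p : Sigma * 'cV[R]_n =>
  value_contraction i0 boundM p.1 p.2 lam_mu).
exists (fun i x => Phi (i, x)), M, mu; split=> //; split; first by apply/andP.
move=> x0 sigma k.
pose xk := traj sigma (fun j h => Phi (sigma j, head 0 h)) x0.
have V_decay j : V (xk j) <= mu ^+ j * V x0.
  elim: j => [|j IH]; first by rewrite expr0 mul1r.
  apply: le_trans (HPhi (sigma j, xk j)) _.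
  by rewrite exprS -mulrA ler_wpM2l.
apply: le_trans (value_ge_enorm i0 boundM _) _; apply: le_trans (V_decay k) _.
rewrite mulrAC [leLHS]mulrC; apply: ler_wpM2r; first exact: exprn_ge0.
exact: value_le (boundM x0).
Qed.

End Switched.

Theorem theorem1 (R : realType) (Sigma : finType) (n m : nat)
    (A : Sigma -> 'M[R]_n) (B : Sigma -> 'M[R]_(n, m)) :
  (0 < #|Sigma|)%N -> (DFS A B <-> DFSm A B).
Proof.
case/card_gt0P => i0 _; split; [exact: DFS_DFSm | exact: DFSm_DFS].
Qed.
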